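(* Let $(R,\mathfrak m)$ be a one-dimensional Cohen–Macaulay local ring admitting a canonical module $\omega_R$ with $R\subseteq\omega_R\subseteq\overline{R}$, let $B=\mathfrak m:\mathfrak m$ with Jacobson radical $J(B)$, and assume $\mathfrak m^2\subseteq R:\omega_R$. Let $I$ be an ideal of $B$ contained in $J(B)$. The following are equivalent: (1) for every minimal system of generators $\{x_1,\dots,x_n\}$ of $\mathfrak m$ for which $R:\omega_R=(x_1,\dots,x_r)^2+(x_{r+1},\dots,x_n)$ (for some $0\le r\le n$), there is no $x\in I$ such that $x_j=x\,x_i$ for some $i,j\in\{1,\dots,r\}$; (2) $I\subseteq (R:\omega_R):\mathfrak m$.
   Context: $Q(R)$ is the total ring of fractions and $\overline R$ the integral closure of $R$ in $Q(R)$; for fractional ideals $I,J$, $I:J=\{r\in Q(R)\mid rJ\subseteq I\}$. *)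

(* A commutative ring R is modelled as a subring of its
   total ring of fractions Q; all fractional ideals / submodules are
   subsets of Q (predicates Q -> Prop). *)
From mathcomp Require Import all_boot all_algebra.
Set Implicit Arguments. Unset Strict Implicit. Unset Printing Implicit Defensive.
Import GRing.Theory.
Local Open Scope ring_scope.

Section Defs.
Variable Q : comUnitRingType.

Definition subS (A B : Q -> Prop) : Prop := forall x, A x -> B x.
Definition eqS (A B : Q -> Prop) : Prop := forall x, A x <-> B x.

Definition colon (I J : Q -> Prop) : Q -> Prop :=
  fun q => forall b, J b -> I (q * b).

Inductive span (R S : Q -> Prop) : Q -> Prop :=
| span_gen x : S x -> span R S x
| span_0 : span R S 0
| span_add x y : span R S x -> span R S y -> span R S (x + y)
| span_mul r x : R r -> span R S x -> span R S (r * x).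

Definition gen (R : Q -> Prop) (xs : seq Q) : Q -> Prop :=
  span R (fun z => z \in xs).

Definition sumS (R A B : Q -> Prop) : Q -> Prop :=
  span R (fun z => A z \/ B z).

Definition prodS (R A B : Q -> Prop) : Q -> Prop :=
  span R (fun z => exists a b, A a /\ B b /\ z = a * b).

Definition is_subring (R : Q -> Prop) : Prop :=
  [/\ R 0, R 1, (forall x y, R x -> R y -> R (x - y))
    & (forall x y, R x -> R y -> R (x * y))].

Definition is_ideal (A I : Q -> Prop) : Prop :=
  [/\ subS I A, I 0, (forall x y, I x -> I y -> I (x + y))
    & (forall a x, A a -> I x -> I (a * x))].

Definition is_prime_ideal (A P : Q -> Prop) : Prop :=
  [/\ is_ideal A P, ~ P 1
    & (forall x y, A x -> A y -> P (x * y) -> P x \/ P y)].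

Definition is_maximal_ideal (A M : Q -> Prop) : Prop :=
  [/\ is_ideal A M, ~ M 1
    & (forall N, is_ideal A N -> subS M N -> N 1 \/ subS N M)].

Definition jacobson (A : Q -> Prop) : Q -> Prop :=
  fun x => A x /\ forall M, is_maximal_ideal A M -> M x.

Definition nzd_in (A : Q -> Prop) (x : Q) : Prop :=
  A x /\ forall y, A y -> x * y = 0 -> y = 0.

Definition nzd (x : Q) : Prop := forall y, x * y = 0 -> y = 0.

Definition total_ring_of_fractions (R : Q -> Prop) : Prop :=
  (forall s, nzd_in R s -> s \is a GRing.unit) /\
  (forall q, exists a s, R a /\ nzd_in R s /\ q = a / s).

Definition noetherian (R : Q -> Prop) : Prop :=
  forall I, is_ideal R I -> exists xs, eqS I (gen R xs).

Definition nonunits (R : Q -> Prop) : Q -> Prop :=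
  fun x => R x /\ ~ (exists y, R y /\ x * y = 1).

(* local: the non-units form an ideal, which is then the maximal ideal *)
Definition local (R : Q -> Prop) : Prop :=
  forall x y, nonunits R x -> nonunits R y -> nonunits R (x + y).

(* Krull dimension exactly one (R local with maximal ideal m) *)
Definition krull_dim_one (R : Q -> Prop) : Prop :=
  (exists P, is_prime_ideal R P /\ subS P (nonunits R) /\
             ~ subS (nonunits R) P) /\
  (forall P1 P2 P3, is_prime_ideal R P1 -> is_prime_ideal R P2 ->
     is_prime_ideal R P3 -> subS P1 P2 -> subS P2 P3 ->
     eqS P1 P2 \/ eqS P2 P3).

(* one-dimensional Cohen-Macaulay: depth m >= 1, i.e. m has a nonzerodivisor *)
Definition cm_dim_one (R : Q -> Prop) : Prop :=
  krull_dim_one R /\ exists x, nonunits R x /\ nzd_in R x.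

Definition integral_closure (R : Q -> Prop) : Q -> Prop :=
  fun x => exists p : {poly Q},
    [/\ p \is monic, (forall i, R p`_i) & root p x].

Definition fractional_ideal (R I : Q -> Prop) : Prop :=
  (exists xs, eqS I (gen R xs)) /\ exists x, I x /\ nzd x.

(* canonical ideal (Herzog--Kunz): K : (K : I) = I for all fractional I *)
Definition canonical_ideal (R K : Q -> Prop) : Prop :=
  fractional_ideal R K /\
  forall I, fractional_ideal R I -> eqS (colon K (colon K I)) I.

Definition minimal_gens (R m : Q -> Prop) (xs : seq Q) : Prop :=
  eqS (gen R xs) m /\
  forall ys, eqS (gen R ys) m -> (size xs <= size ys)%N.

End Defs.

From Pilot Require Import Defs.
From mathcomp Require Import all_boot all_algebra.
From mathcomp Require Import boolp classical_sets.
From mathcomp Require Import ring.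
Set Implicit Arguments. Unset Strict Implicit. Unset Printing Implicit Defensive.
Import GRing.Theory.
Local Open Scope ring_scope.

(* Write K = R : omega and B = m : m.
   (2) => (1): if x in I maps m into K and x_j = x x_i, then x_j lies in
   K = (x_1..x_r)^2 + (x_(r+1)..x_n), which is inside m x_j + (the other generators);
   by Nakayama x_j is redundant, contradicting minimality.
   (1) => (2): we may assume K <> R. Then B K <= K, since a unit k w (k in K, w in omega)
   would have an inverse in omega, integral over R, hence k would be a unit.  So x in J(B)
   acts on the R/m-vector space m/K (note m^2 <= K).  If x m is not inside K, x is not a
   scalar l there: l would be a unit, and x - l, a unit of B, would kill m/K.  Hence some y
   has y, x y independent modulo K.  Exchanging y, x y and then generators of K into a
   minimal generating system of m gives y, x y, x_3, .., x_r, x_(r+1), .., x_n with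
   x_(r+1), .., x_n in K and K = (x_1..x_r)^2 + (x_(r+1)..x_n), and x_2 = x x_1
   contradicts (1). *)

Section Subring.
Variables (Q : comUnitRingType) (R : Q -> Prop).
Hypothesis HR : is_subring R.

Lemma subring0 : R 0. Proof. by case: HR. Qed.
Lemma subring1 : R 1. Proof. by case: HR. Qed.
Lemma subringB x y : R x -> R y -> R (x - y). Proof. by case: HR => _ _ + _; apply. Qed.
Lemma subringM x y : R x -> R y -> R (x * y). Proof. by case: HR => _ _ _; apply. Qed.

Lemma subringN x : R x -> R (- x).
Proof. by move=> Rx; rewrite -sub0r; apply: subringB => //; apply: subring0. Qed.

Lemma subringD x y : R x -> R y -> R (x + y).
Proof. by move=> Rx Ry; rewrite -[y]opprK; apply/subringB/subringN. Qed.

Lemma subringX x n : R x -> R (x ^+ n).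
Proof.
by move=> Rx; elim: n => [|n IHn]; rewrite ?expr0 ?exprS; [exact: subring1|exact: subringM].
Qed.

Lemma integral_inv_in_subring k w :
  R k -> k * w = 1 -> integral_closure R w -> R w.
Proof.
move=> Rk kw [p [mon_p Rp /rootP]].
have lead_p : p`_(size p).-1 = 1 by move/monicP: mon_p.
rewrite horner_coef; case Ep: (size p) lead_p => [|[|e]] lead_p.
- by have := monic_neq0 mon_p; rewrite -size_poly_eq0 Ep.
- by rewrite big_ord_recr big_ord0 /= lead_p add0r mul1r expr0 => /eqP; rewrite oner_eq0.
(* Multiplying the monic equation of w by k ^+ e expresses w as a polynomial in k. *)
move/(congr1 (fun z => z * k ^+ e)); rewrite big_ord_recr /= lead_p mul1r mul0r mulrDl mulr_suml.
have -> : w ^+ e.+1 * k ^+ e = w.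
  by rewrite exprS -mulrA -exprMn (mulrC w k) kw expr1n mulr1.
move=> /eqP; rewrite addrC addr_eq0 => /eqP ->.
apply/subringN/(big_ind R subring0 subringD) => i _.
have le_ie : (i <= e)%N by rewrite -ltnS.
rewrite -[in k ^+ e](subnK le_ie) exprD -mulrA [w ^+ i * _]mulrC -mulrA -exprMn.
rewrite kw expr1n mulr1.
exact/subringM/subringX.
Qed.

Lemma span_least (S T : Q -> Prop) :
  T 0 -> (forall x y, T x -> T y -> T (x + y)) ->
  (forall r x, R r -> T x -> T (r * x)) -> (forall x, S x -> T x) ->
  forall x, Defs.span R S x -> T x.
Proof. by move=> T0 TD TM ST x; elim=> //; auto. Qed.

Lemma span_subset (S T : Q -> Prop) : (forall x, S x -> T x) ->
  forall x, Defs.span R S x -> Defs.span R T x.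
Proof.
move=> ST; apply: span_least; [exact: span_0|exact: span_add|exact: span_mul|].
by move=> x /ST; apply: span_gen.
Qed.

Lemma spanB S x y : Defs.span R S x -> Defs.span R S y -> Defs.span R S (x - y).
Proof.
move=> Sx Sy; apply: span_add => //; rewrite -mulN1r.
by apply: span_mul => //; apply/subringN/subring1.
Qed.

Lemma gen_mem (l : seq Q) z : z \in l -> gen R l z.
Proof. by move=> zl; apply: span_gen. Qed.

Lemma gen_subset (l1 l2 : seq Q) : {subset l1 <= l2} ->
  forall q, gen R l1 q -> gen R l2 q.
Proof. by move=> sub12; apply: span_subset => z /sub12. Qed.

Lemma eq_gen_perm (l1 l2 : seq Q) : perm_eq l1 l2 -> eqS (gen R l1) (gen R l2).
Proof. by move=> /perm_mem eq12 q; split; apply: gen_subset => z; rewrite eq12. Qed.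

Lemma gen_nil q : gen R [::] q -> q = 0.
Proof.
by elim=> // [x y _ -> _ ->|r x _ _ ->]; rewrite ?addr0 ?mulr0.
Qed.

Lemma gen_cat (a b : seq Q) q : gen R (a ++ b) q ->
  exists q1 q2, [/\ gen R a q1, gen R b q2 & q = q1 + q2].
Proof.
elim=> [z| |_ _ _ [u [v [gu gv ->]]] _ [u' [v' [gu' gv' ->]]]|r _ Rr _ [u [v [gu gv ->]]]].
- rewrite mem_cat => /orP[za|zb].
  + by exists z, 0; split; [exact: gen_mem|exact: span_0|rewrite addr0].
  + by exists 0, z; split; [exact: span_0|exact: gen_mem|rewrite add0r].
- by exists 0, 0; split; [exact: span_0|exact: span_0|rewrite addr0].
- by exists (u + u'), (v + v'); split; [exact: span_add|exact: span_add|ring].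
- by exists (r * u), (r * v); split; [exact: span_mul|exact: span_mul|ring].
Qed.

Lemma gen_split (a b : seq Q) t q :
  gen R (a ++ t :: b) q <-> exists c u, [/\ R c, gen R (a ++ b) u & q = c * t + u].
Proof.
have sub_ab : {subset a ++ b <= a ++ t :: b}.
  by move=> z; rewrite !mem_cat inE => /orP[] ->; rewrite ?orbT.
split; last first.
  move=> [c [u [Rc gu ->]]]; apply: span_add; last exact: gen_subset sub_ab _ gu.
  by apply/span_mul/gen_mem; rewrite ?mem_cat ?mem_head ?orbT.
elim=> [z| |_ _ _ [c [u [Rc gu ->]]] _ [c' [u' [Rc' gu' ->]]]|r _ Rr _ [c [u [Rc gu ->]]]].
- rewrite mem_cat inE orbCA => /orP[/eqP ->|zab].
    by exists 1, 0; split; [exact: subring1|exact: span_0|ring].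
  by exists 0, z; split; [exact: subring0|apply: gen_mem; rewrite mem_cat|ring].
- by exists 0, 0; split; [exact: subring0|exact: span_0|ring].
- by exists (c + c'), (u + u'); split; [exact: subringD|exact: span_add|ring].
- by exists (r * c), (r * u); split; [exact: subringM|exact: span_mul|ring].
Qed.

Definition unit_in c := exists d, R d /\ c * d = 1.

Lemma unit_in_cancel c : unit_in c -> forall t, exists d, R d /\ t = d * (c * t).
Proof. by move=> [d [Rd cd]] t; exists d; split => //; rewrite mulrA (mulrC d) cd mul1r. Qed.

Lemma nonunits_or_unit c : R c -> nonunits R c \/ unit_in c.
Proof. by move=> Rc; case: (pselect (unit_in c)) => [|nu]; [right|left]. Qed.

Lemma nonunits_sub c : nonunits R c -> R c. Proof. by case. Qed.

Lemma nonunits_unit c : nonunits R c -> ~ unit_in c.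
Proof. by move=> [_ nu] [d [Rd cd]]; apply: nu; exists d. Qed.

Lemma nonunitsM r x : R r -> nonunits R x -> nonunits R (r * x).
Proof.
move=> Rr [Rx nux]; split; first exact: subringM.
move=> [d [Rd rxd]]; apply: nux; exists (r * d); split; first exact: subringM.
by rewrite -rxd; ring.
Qed.

Lemma nonunits0 : nonunits R 0.
Proof.
split; first exact: subring0.
by move=> [d [_ /eqP]]; rewrite mul0r eq_sym oner_eq0.
Qed.

Hypothesis Hloc : local R.

Lemma nonunitsB x y : nonunits R x -> nonunits R y -> nonunits R (x - y).
Proof.
move=> mx my; apply: Hloc => //; rewrite -mulN1r.
by apply: nonunitsM => //; apply/subringN/subring1.
Qed.

Lemma unit_in1B c : nonunits R c -> unit_in (1 - c).
Proof.
move=> mc; have [m1c|//] := nonunits_or_unit (subringB subring1 (nonunits_sub mc)).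
have := Hloc m1c mc; rewrite subrK => m1.
by case: (nonunits_unit m1); exists 1; split; [exact: subring1|rewrite mulr1].
Qed.

End Subring.

Section Generators.
Variables (Q : comUnitRingType) (R : Q -> Prop).
Hypothesis HR : is_subring R.
Hypothesis Hloc : local R.

Local Notation m := (nonunits R).
Local Notation msq := (prodS R (nonunits R) (nonunits R)).

Lemma gen_cons (l : seq Q) t q :
  gen R (t :: l) q <-> exists c u, [/\ R c, gen R l u & q = c * t + u].
Proof. exact: (gen_split HR [::]). Qed.

Lemma gen1 t q : gen R [:: t] q -> exists c, R c /\ q = c * t.
Proof.
by move=> /gen_cons [c [u [Rc /gen_nil -> ->]]]; exists c; rewrite addr0.
Qed.

Lemma nonunits_ideal : is_ideal R m.
Proof.
split; [exact: nonunits_sub|exact: nonunits0|exact: Hloc|exact: nonunitsM].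
Qed.

Lemma gen_nonunits (l : seq Q) : (forall z, z \in l -> m z) -> forall q, gen R l q -> m q.
Proof. exact: span_least (nonunits0 HR) Hloc (nonunitsM HR). Qed.

Lemma exists_minimal_gens : noetherian R -> exists g, minimal_gens R m g.
Proof.
move=> Hn; have [g0 g0_m] := Hn _ nonunits_ideal.
pose P n := `[< exists g, size g = n /\ eqS (gen R g) m >].
have exP : exists n, P n by exists (size g0); apply/asboolP; exists g0; split=> // q; rewrite g0_m.
case: (ex_minnP exP) => n /asboolP [g [<- g_m]] min_n.
by exists g; split=> // ys ys_m; apply/min_n/asboolP; exists ys.
Qed.

Lemma gen_replace (l : seq Q) t e c u : R c -> unit_in R c -> gen R l u -> e = c * t + u ->
  eqS (gen R (e :: l)) (gen R (t :: l)).
Proof.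
move=> Rc uc gu -> q; rewrite !gen_cons; split.
  move=> [c' [u' [Rc' gu' ->]]]; exists (c' * c), (c' * u + u').
  by split; [exact: subringM|apply: span_add => //; exact: span_mul|ring].
move=> [c' [u' [Rc' gu' ->]]]; have [d [Rd td]] := unit_in_cancel uc t.
exists (c' * d), (u' - c' * d * u); split; first exact: subringM.
  by apply: (spanB HR gu' (span_mul _ gu)); apply: subringM.
by rewrite {1}td; ring.
Qed.

Lemma gen_unit_coef p s e : (forall z, z \in s -> m z) -> gen R (p ++ s) e ->
  (exists s1 t s2 c u, [/\ s = s1 ++ t :: s2, R c /\ unit_in R c,
                           gen R (p ++ s1 ++ s2) u & e = c * t + u]) \/
  (exists u v, [/\ gen R p u, msq v & e = u + v]).
Proof.
elim: s e => [|t s IHs] e m_s gen_e.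
  by right; exists e, 0; split; [rewrite cats0 in gen_e|exact: span_0|rewrite addr0].
have [c [u [Rc gu ->]]] := proj1 (gen_split HR p s t e) gen_e.
have [mc|uc] := nonunits_or_unit Rc; last by left; exists [::], t, s, c, u.
have m_t : m t by apply: m_s; rewrite mem_head.
have [[s1 [t' [s2 [c' [u' [-> uc' gu' ->]]]]]]|[u0 [v [gu0 msq_v ->]]]] :=
  IHs u (fun z zs => m_s z (mem_behead (s := t :: s) zs)) gu.
- left; exists (t :: s1), t', s2, c', (c * t + u'); split=> //; last by rewrite addrCA.
  by apply/(gen_split HR); exists c, u'.
- right; exists u0, (c * t + v); split=> //; last by rewrite addrCA.
  by apply: span_add => //; apply: span_gen; exists c, t.
Qed.

Lemma gen_exchange p s e : eqS (gen R (p ++ s)) m -> m e ->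
  (exists s', size s = (size s').+1 /\ eqS (gen R (p ++ e :: s')) m) \/
  (exists u v, [/\ gen R p u, msq v & e = u + v]).
Proof.
move=> gen_m me.
have m_s z : z \in s -> m z by move=> zs; apply/gen_m/gen_mem; rewrite mem_cat zs orbT.
have [[s1 [t [s2 [c [u [es [Rc uc] gu eu]]]]]]|] := gen_unit_coef m_s (proj2 (gen_m e) me).
  2: by right.
left; exists (s1 ++ s2); split; first by rewrite es !size_cat addnS.
have perm_e : perm_eq (p ++ e :: s1 ++ s2) (e :: p ++ s1 ++ s2).
  by rewrite (perm_catCA p [:: e]).
have perm_t : perm_eq (t :: p ++ s1 ++ s2) (p ++ s1 ++ t :: s2).
  by rewrite perm_sym catA (perm_catCA (p ++ s1) [:: t]) /= -catA.
move=> q; rewrite -gen_m (eq_gen_perm R perm_e) (gen_replace Rc uc gu eu).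
by rewrite es; exact: (eq_gen_perm R perm_t q).
Qed.

Lemma minimal_gens_irredundant a t b c u : minimal_gens R m (a ++ t :: b) ->
  m c -> gen R (a ++ b) u -> t = c * t + u -> False.
Proof.
move=> [gen_m min_size] mc gu et.
have gt : gen R (a ++ b) t.
  have [d [Rd ->]] := unit_in_cancel (unit_in1B HR Hloc mc) t.
  by apply: span_mul; rewrite // mulrBl mul1r {1}et addrC addKr.
have : (size (a ++ t :: b) <= size (a ++ b))%N.
  apply: min_size => q; rewrite -gen_m (gen_split HR a b t q).
  split=> [gq|[c' [u' [Rc' gu' ->]]]]; first by exists 0, q; split; [exact: subring0| |ring].
  by apply: span_add => //; apply: span_mul.
by rewrite !size_cat /= addnS ltnn.
Qed.

Lemma gen_sqr_sum_split a t b zs q : (forall z, z \in a ++ t :: b -> m z) ->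
  sumS R (prodS R (gen R (a ++ t :: b)) (gen R (a ++ t :: b))) (gen R zs) q ->
  exists c u, [/\ m c, gen R (a ++ b ++ zs) u & q = c * t + u].
Proof.
move=> m_ys; pose S w := exists c u, [/\ m c, gen R (a ++ b ++ zs) u & w = c * t + u].
have S0 : S 0 by exists 0, 0; split; [exact: nonunits0|exact: span_0|ring].
have SD v w : S v -> S w -> S (v + w).
  move=> [c [u [mc gu ->]]] [c' [u' [mc' gu' ->]]].
  by exists (c + c'), (u + u'); split; [exact: Hloc|exact: span_add|ring].
have SM r w : R r -> S w -> S (r * w).
  move=> Rr [c [u [mc gu ->]]].
  by exists (r * c), (r * u); split; [exact: nonunitsM|exact: span_mul|ring].
apply: (span_least S0 SD SM) => z [|gz]; last first.
  exists 0, z; split; [exact: nonunits0| |ring].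
  by apply: gen_subset gz => w wz; rewrite !mem_cat wz !orbT.
apply: (span_least S0 SD SM) => _ [p [p' [gp [gp' ->]]]].
have mp' : m p' := gen_nonunits m_ys gp'.
have [c [u [Rc gu ->]]] := proj1 (gen_split HR a b t p) gp.
exists (p' * c), (p' * u); split; [by rewrite mulrC; apply: nonunitsM| |ring].
apply: span_mul; first exact: nonunits_sub.
by apply: gen_subset gu => w wab; rewrite catA mem_cat wab.
Qed.

End Generators.

Lemma colon_self_subring (Q : comUnitRingType) (N : Q -> Prop) :
  N 0 -> (forall x y, N x -> N y -> N (x - y)) -> is_subring (colon N N).
Proof.
move=> N0 NB; split=> [b _|b Nb|x y Nx Ny b Nb|x y Nx Ny b Nb].
- by rewrite mul0r.
- by rewrite mul1r.
- by rewrite mulrBl; apply: NB; [apply: Nx|apply: Ny].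
- by rewrite -mulrA; apply/Nx/Ny.
Qed.

Section MaximalIdeals.
Variables (Q : comUnitRingType) (A : Q -> Prop).
Hypothesis HA : is_subring A.

Let proper_ideal_with a (X : set Q) := [/\ is_ideal A X, ~ X 1 & X a].

Lemma bigcup_ideal_chain a (F : set (set Q)) X0 q0 :
  total_on F subset -> (forall X q, F X -> X q -> proper_ideal_with a X) ->
  F X0 -> X0 q0 -> proper_ideal_with a (\bigcup_(X in F) X).
Proof.
move=> Ftot FP FX0 X0q0; have [[_ X00 _ _] _ X0a] := FP X0 q0 FX0 X0q0.
split; [split| |].
- by move=> q [X FX Xq]; have [[XA _ _ _] _ _] := FP X q FX Xq; apply: XA.
- by exists X0.
- move=> q1 q2 [X FX Xq1] [Y FY Yq2].
  have [XY|YX] := Ftot X Y FX FY.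
    by exists Y => //; have [[_ _ YD _] _ _] := FP Y q2 FY Yq2; apply: YD => //; apply: XY.
  by exists X => //; have [[_ _ XD _] _ _] := FP X q1 FX Xq1; apply: XD => //; apply: YX.
- move=> b q Ab [X FX Xq]; exists X => //.
  by have [[_ _ _ XM] _ _] := FP X q FX Xq; apply: XM.
- by move=> [X FX X1]; have [_ nX1 _] := FP X 1 FX X1.
- by exists X0.
Qed.

Lemma maximal_ideal_exists a : A a -> ~ (exists u, A u /\ a * u = 1) ->
  exists M, is_maximal_ideal A M /\ M a.
Proof.
move=> Aa nua.
(* The empty set is admitted so that the empty chain has an upper bound. *)
pose P X := (forall q, ~ X q) \/ proper_ideal_with a X.
have [M [PM Mmax]] : exists M, P M /\ forall N, (M `<` N)%classic -> ~ P N.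
  apply: Zorn_bigcup => F FP Ftot.
  case: (pselect (exists X q, F X /\ X q)) => [[X0 [q0 [FX0 X0q0]]]|Fempty].
    right; apply: (bigcup_ideal_chain Ftot _ FX0 X0q0) => X q FX Xq.
    by case: (FP X FX) => // Xempty; case: (Xempty q).
  by left=> q [X FX Xq]; apply: Fempty; exists X, q.
pose aA q := exists b, A b /\ q = a * b.
have aA_a : aA a by exists 1; split; [exact: subring1|rewrite mulr1].
have [Mempty|[Mid nM1 Ma]] := PM.
  case: (Mmax aA); first by split=> [q /Mempty // | /(_ a aA_a) /Mempty].
  right; split=> [|[b [Ab /esym ab1]]|//]; last by apply: nua; exists b.
  split=> [_ [b [Ab ->]]||_ _ [b [Ab ->]] [c [Ac ->]]|c _ Ac [b [Ab ->]]].
  - exact: subringM.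
  - by exists 0; split; [exact: subring0|rewrite mulr0].
  - by exists (b + c); split; [exact: subringD|rewrite mulrDr].
  - by exists (c * b); split; [exact: subringM|rewrite mulrCA].
exists M; split=> //; split=> // N Nid MN.
case: (pselect (N 1)) => [|nN1]; [by left|right].
apply: contrapT => nNM; apply: (Mmax N); first by split.
by right; split=> //; apply: MN.
Qed.

Lemma jacobson_unitB x l : jacobson A x -> A l -> unit_in A l ->
  exists u, A u /\ (x - l) * u = 1.
Proof.
move=> [Ax Jx] Al [d [Ad ld]]; apply: contrapT => nu.
have [M [Mmax Mxl]] := maximal_ideal_exists (subringB HA Ax Al) nu.
have [[_ _ MD MM] nM1 _] := Mmax.
have Ml : M l.
  have -> : l = x + (-1) * (x - l) by ring.
  by apply: MD; [exact: Jx|apply: MM => //; exact: subringN (subring1 HA)].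
by apply: nM1; rewrite -ld mulrC; apply: MM.
Qed.

End MaximalIdeals.

Section CanonicalColon.
Variables (Q : comUnitRingType) (R omega : Q -> Prop).
Hypothesis HR : is_subring R.
Hypothesis Hloc : local R.
Hypothesis Hcan : canonical_ideal R omega.
Hypothesis HRo : subS R omega.
Hypothesis Hoint : subS omega (integral_closure R).
Hypothesis Hmm : subS (prodS R (nonunits R) (nonunits R)) (colon R omega).

Local Notation m := (nonunits R).
Local Notation K := (colon R omega).
Local Notation B := (colon (nonunits R) (nonunits R)).

Lemma omega_mul r w : R r -> omega w -> omega (r * w).
Proof. by case: Hcan => [[[ws gen_ws] _] _] Rr /gen_ws ow; apply/gen_ws/span_mul. Qed.

Lemma K_sub_R k : K k -> R k.
Proof. by move=> Kk; have := Kk 1 (HRo (subring1 HR)); rewrite mulr1. Qed.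

Lemma K_add k l : K k -> K l -> K (k + l).
Proof. by move=> Kk Kl w ow; rewrite mulrDl; apply: (subringD HR); [apply: Kk|apply: Kl]. Qed.

Lemma K_sub k l : K k -> K l -> K (k - l).
Proof. by move=> Kk Kl w ow; rewrite mulrBl; apply: (subringB HR); [apply: Kk|apply: Kl]. Qed.

Lemma K_mul r k : R r -> K k -> K (r * k).
Proof. by move=> Rr Kk w ow; rewrite -mulrA; apply/(subringM HR)/Kk. Qed.

Lemma K_ideal : is_ideal R K.
Proof.
split=> [|w _||]; [exact: K_sub_R|rewrite mul0r; exact: (subring0 HR)|exact: K_add|exact: K_mul].
Qed.

Lemma gen_K (zs : seq Q) : (forall z, z \in zs -> K z) -> forall q, gen R zs q -> K q.
Proof. by case: K_ideal => _ K0 KD KM; apply: span_least. Qed.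

Lemma mm_K a b : m a -> m b -> K (a * b).
Proof. by move=> ma mb; apply/Hmm/span_gen; exists a, b. Qed.

Lemma B_subring : is_subring B.
Proof. exact: colon_self_subring (nonunits0 HR) (nonunitsB HR Hloc). Qed.

Lemma R_sub_B r : R r -> B r.
Proof. by move=> Rr b mb; apply: nonunitsM. Qed.

Lemma unit_in_B l : unit_in R l -> unit_in B l.
Proof. by move=> [d [Rd ld]]; exists d; split=> //; apply: R_sub_B. Qed.

Lemma K_nonunit_coef a q : R a -> ~ K q -> K (a * q) -> m a.
Proof.
move=> Ra nKq Kaq; have [//|ua] := nonunits_or_unit Ra.
by case: nKq; have [d [Rd ->]] := unit_in_cancel ua q; apply: K_mul.
Qed.

Section ProperColon.
Hypothesis HK1 : ~ K 1.

Lemma K_sub_m k : K k -> m k.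
Proof.
move=> Kk; have [//|[d [Rd kd]]] := nonunits_or_unit (K_sub_R Kk).
by case: HK1; rewrite -kd mulrC; apply: K_mul.
Qed.

Lemma B_K_mul x k : B x -> K k -> K (x * k).
Proof.
move=> Bx Kk w ow; rewrite -mulrA.
have [mkw|[u [Ru kwu]]] := nonunits_or_unit (Kk w ow); first exact: nonunits_sub (Bx _ mkw).
case: HK1; rewrite -kwu -mulrA mulrC; apply: K_mul => //.
apply: (integral_inv_in_subring HR (K_sub_R Kk)); first by rewrite mulrA.
by apply/Hoint; rewrite mulrC; apply: omega_mul.
Qed.

(* Multiplication by x acts on the R/m-vector space m/K (as m^2 <= K); these say that y is,
   resp. is not, an eigenvector of it. *)
Definition eigenvec x y a := K (x * y - a * y).
Definition not_eigenvec x y := forall a, R a -> ~ eigenvec x y a.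

Section Eigenvectors.
Variable x : Q.
Hypothesis Bx : B x.

Lemma eigenvec_unit y a : m y -> ~ K (x * y) -> R a -> eigenvec x y a -> unit_in R a.
Proof.
move=> my nKxy Ra Ey; have [ma|//] := nonunits_or_unit Ra.
by case: nKxy; rewrite -(subrK (a * y) (x * y)); apply: K_add => //; apply: mm_K.
Qed.

Lemma not_eigenvec_notK y : not_eigenvec x y -> ~ K y.
Proof.
move=> nEy Ky; apply: (nEy 0 (subring0 HR)).
by rewrite /eigenvec mul0r subr0; apply: B_K_mul.
Qed.

(* l and mu differ modulo m, while an eigenvalue nu of y + z would agree with both. *)
Lemma not_eigenvec_add y z l mu : m y -> m z -> ~ K y -> R l -> R mu ->
  eigenvec x y l -> eigenvec x z mu -> ~ eigenvec x z l -> not_eigenvec x (y + z).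
Proof.
move=> my mz nKy Rl Rmu Ey Ez nEz nu Rnu Eyz.
have K_comb : K ((l - nu) * y + (mu - nu) * z).
  have -> : (l - nu) * y + (mu - nu) * z =
            (x * (y + z) - nu * (y + z)) - (x * y - l * y) - (x * z - mu * z) by ring.
  by apply: K_sub => //; apply: K_sub.
have m_mu_nu : m (mu - nu).
  apply: (K_nonunit_coef (subringB HR Rmu Rnu) nEz).
  have -> : (mu - nu) * (x * z - l * z) =
            (x - l) * ((l - nu) * y + (mu - nu) * z) - (l - nu) * (x * y - l * y) by ring.
  apply: K_sub; last exact/K_mul/Ey/(subringB HR).
  by apply: B_K_mul => //; apply: (subringB B_subring) => //; apply: R_sub_B.
have m_l_nu : m (l - nu).
  apply: (K_nonunit_coef (subringB HR Rl Rnu) nKy).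
  by rewrite -(addrK ((mu - nu) * z) ((l - nu) * y)); apply: K_sub => //; apply: mm_K.
apply: nEz; rewrite /eigenvec.
have -> : x * z - l * z = (x * z - mu * z) + ((mu - nu) - (l - nu)) * z by ring.
by apply: K_add => //; apply: mm_K => //; apply: nonunitsB.
Qed.

Lemma not_eigenvec_indep y a b : m y -> not_eigenvec x y -> R a -> R b ->
  K (a * y + b * (x * y)) -> m a /\ m b.
Proof.
move=> my nEy Ra Rb Kab.
have mb : m b.
  have [//|[d [Rd bd]]] := nonunits_or_unit Rb.
  case: (nEy (- (d * a))); first exact/(subringN HR)/(subringM HR).
  rewrite /eigenvec; have -> : x * y - - (d * a) * y = d * (a * y + b * (x * y)).
    by transitivity (d * a * y + (b * d) * (x * y)); [rewrite bd mul1r; ring|ring].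
  exact: K_mul.
split=> //; apply: (K_nonunit_coef Ra (not_eigenvec_notK nEy)).
by rewrite -(addrK (b * (x * y)) (a * y)); apply: K_sub => //; apply/mm_K/Bx.
Qed.

End Eigenvectors.

Lemma exists_not_eigenvec x y0 : jacobson B x -> m y0 -> ~ K (x * y0) ->
  exists y, m y /\ not_eigenvec x y.
Proof.
move=> Jx my0 nKxy0; have Bx : B x by case: Jx.
have nKy0 : ~ K y0 by move=> Ky0; apply/nKxy0/B_K_mul.
case: (pselect (not_eigenvec x y0)) => [|/existsNP [l /not_implyP [Rl /contrapT Ey0]]].
  by exists y0.
have [u [Bu xlu]] := jacobson_unitB B_subring Jx (R_sub_B Rl)
                       (unit_in_B (eigenvec_unit my0 nKxy0 Rl Ey0)).
have [z [mz nEz]] : exists z, m z /\ ~ eigenvec x z l.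
  apply: contrapT => all_eigen; apply: nKy0.
  have -> : y0 = x * (u * y0) - l * (u * y0).
    by transitivity ((x - l) * u * y0); [rewrite xlu mul1r|ring].
  by apply: contrapT => nE; apply: all_eigen; exists (u * y0); split=> //; apply: Bu.
case: (pselect (not_eigenvec x z)) => [|/existsNP [mu /not_implyP [Rmu /contrapT Ez]]].
  by exists z.
exists (y0 + z); split; first exact: Hloc.
exact: (not_eigenvec_add Bx my0 mz nKy0 Rl Rmu Ey0 Ez nEz).
Qed.

Definition meets_K_in_msq (p : seq Q) :=
  forall u, gen R p u -> K u -> prodS R m m u.

Lemma not_eigenvec_meets x y : B x -> m y -> not_eigenvec x y ->
  meets_K_in_msq [:: y; x * y].
Proof.
move=> Bx my nEy _ /(gen_cons HR) [a [_ [Ra /(gen1 HR) [b [Rb ->]] ->]]] Kab.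
have [ma mb] := not_eigenvec_indep Bx my nEy Ra Rb Kab.
apply: span_add; apply: span_gen; first by exists a, y.
by exists b, (x * y); split; [|split; first exact: Bx].
Qed.

Lemma K_exchange (p rest ks : seq Q) : meets_K_in_msq p -> eqS (gen R (p ++ rest)) m ->
  (forall k, k \in ks -> K k) ->
  exists zs rest', [/\ (size zs + size rest')%N = size rest,
    eqS (gen R ((p ++ zs) ++ rest')) m, (forall z, z \in zs -> K z)
    & forall k, k \in ks -> sumS R (gen R zs) (prodS R m m) k].
Proof.
move=> pK gen_m; elim: ks => [_|k ks IHks K_ks].
  by exists [::], rest; split=> //; rewrite cats0.
have [|zs [rest' [sz gen_m' K_zs ks_sub]]] := IHks.
  by move=> k' k'ks; apply: K_ks; rewrite inE k'ks orbT.
have Kk : K k by apply: K_ks; rewrite mem_head.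
have [[rest'' [sz' gen_m'']]|[u [v [gu msq_v ek]]]] := gen_exchange HR gen_m' (K_sub_m Kk).
  exists (rcons zs k), rest''; split.
  - by rewrite size_rcons -sz sz' addnS.
  - by move: gen_m''; rewrite -cats1 -!catA.
  - by move=> z; rewrite mem_rcons inE => /orP[/eqP ->|/K_zs].
  move=> k'; rewrite inE => /orP[/eqP ->|/ks_sub].
    by apply/span_gen; left; apply: gen_mem; rewrite mem_rcons mem_head.
  apply: span_subset => q [gq|]; [left|by right].
  by apply: gen_subset gq => z zzs; rewrite mem_rcons inE zzs orbT.
exists zs, rest'; split=> // k'; rewrite inE => /orP[/eqP ->|/ks_sub //].
have [u1 [u2 [gu1 gu2 eu]]] := gen_cat gu.
have Ku2 : K u2 := gen_K K_zs gu2.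
have msq_u1 : prodS R m m u1.
  apply: pK gu1 _; have -> : u1 = k - v - u2 by rewrite ek eu; ring.
  by apply: K_sub => //; apply: K_sub => //; apply: Hmm.
rewrite ek eu -addrA (addrC u2) addrA; apply: span_add; apply: span_gen; last by left.
by right; apply: span_add.
Qed.

Lemma K_decomposition (ys zs ks : seq Q) : eqS (gen R (ys ++ zs)) m ->
  (forall z, z \in zs -> K z) -> eqS K (gen R ks) ->
  (forall k, k \in ks -> sumS R (gen R zs) (prodS R m m) k) ->
  eqS K (sumS R (prodS R (gen R ys) (gen R ys)) (gen R zs)).
Proof.
move=> gen_m K_zs K_ks ks_sub.
pose S := sumS R (prodS R (gen R ys) (gen R ys)) (gen R zs).
have S0 : S 0 by exact: span_0.
have SD v w : S v -> S w -> S (v + w) by apply: span_add.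
have SM r w : R r -> S w -> S (r * w) by apply: span_mul.
have gys_m : forall q, gen R ys q -> m q.
  by apply: (gen_nonunits HR Hloc) => z zys; apply/gen_m/gen_mem; rewrite mem_cat zys.
case: K_ideal => _ K0 KD KM.
move=> q; split; last first.
  apply: (span_least K0 KD KM) => z [|/(gen_K K_zs) //].
  by apply: (span_least K0 KD KM) => _ [a [b [ga [gb ->]]]]; apply: mm_K; apply: gys_m.
move/K_ks; apply: (span_least S0 SD SM) => k /ks_sub.
apply: (span_least S0 SD SM) => w [gw|]; first by apply: span_gen; right.
(* m^2 = (ys)^2 + m zs, and m zs lies in (zs). *)
apply: (span_least S0 SD SM) => _ [a [b [ma [mb ->]]]].
have [a1 [a2 [ga1 ga2 ea]]] := gen_cat (proj2 (gen_m a) ma).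
have [b1 [b2 [gb1 gb2 eb]]] := gen_cat (proj2 (gen_m b) mb).
have -> : a * b = a1 * b1 + a1 * b2 + b * a2 by rewrite ea eb; ring.
apply: (SD _ _ (SD _ _ _ _)) => //.
- by apply: span_gen; left; apply: span_gen; exists a1, b1.
- by apply: span_gen; right; apply: span_mul gb2; exact: nonunits_sub (gys_m _ ga1).
- by apply: span_gen; right; apply: span_mul ga2; exact: nonunits_sub.
Qed.

Definition no_gen_multiple (I : Q -> Prop) :=
  forall (xs : seq Q) (r : nat),
    minimal_gens R m xs -> (r <= size xs)%N ->
    eqS K (sumS R (prodS R (gen R (take r xs)) (gen R (take r xs))) (gen R (drop r xs))) ->
    ~ (exists x, I x /\ exists i j : nat,
         [/\ (i < r)%N, (j < r)%N & nth 0 xs j = x * nth 0 xs i]).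

Lemma colon_of_no_gen_multiple I : noetherian R -> subS I (jacobson B) ->
  no_gen_multiple I -> subS I (colon K m).
Proof.
move=> Hn IJ noI x Ix b mb; apply: contrapT => nKxb.
have [Bx _] := IJ x Ix.
have [y [my nEy]] := exists_not_eigenvec (IJ x Ix) mb nKxb.
have nKy := not_eigenvec_notK Bx nEy.
have [g [gen_g min_g]] := exists_minimal_gens HR Hloc Hn.
have [[s [sz_g gen_y]]|[u [v [/gen_nil -> msq_v ey]]]] :=
  gen_exchange HR (p := [::]) gen_g my; last first.
  by case: nKy; rewrite ey add0r; apply: Hmm.
have [[rest [sz_s gen_yxy]]|[u [v [/(gen1 HR) [c [Rc ->]] msq_v exy]]]] :=
  gen_exchange HR (p := [:: y]) gen_y (Bx y my); last first.
  by case: (nEy c Rc); rewrite /eigenvec exy addrC addKr; apply: Hmm.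
have [ks K_ks] := Hn _ K_ideal.
have [zs [rest' [sz gen_m K_zs ks_sub]]] :=
  K_exchange (not_eigenvec_meets Bx my nEy) gen_yxy
    (fun k kks => proj2 (K_ks k) (gen_mem R kks)).
pose ys := [:: y; x * y] ++ rest'.
have gen_xs : eqS (gen R (ys ++ zs)) m.
  move=> q; rewrite -gen_m; apply: eq_gen_perm.
  by rewrite -!catA perm_cat2l perm_catC.
apply: (noI (ys ++ zs) (size ys)).
- split=> // l gen_l; apply: leq_trans (min_g l gen_l).
  by rewrite sz_g sz_s -sz /ys !size_cat /= !addSn addnC.
- by rewrite size_cat leq_addr.
- rewrite take_size_cat // drop_size_cat //.
  exact: K_decomposition gen_xs K_zs K_ks ks_sub.
- by exists x; split=> //; exists 0%N, 1%N.
Qed.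

End ProperColon.

Lemma no_gen_multiple_of_colon I : subS I (colon K m) -> no_gen_multiple I.
Proof.
move=> IK xs r [gen_m min_xs] le_r K_eq [x [Ix [i [j [lt_ir lt_jr xj]]]]].
have m_xs z : z \in xs -> m z by move=> zxs; apply/gen_m/gen_mem.
have K_xj : K (nth 0 xs j).
  by rewrite xj; apply: IK => //; apply/m_xs/mem_nth/(leq_trans lt_ir le_r).
set ys := take r xs in K_eq.
have ys_split : ys = take j ys ++ nth 0 xs j :: drop j.+1 ys.
  by rewrite -(nth_take 0 lt_jr) -drop_nth ?cat_take_drop // size_takel.
set a := take j ys in ys_split; set b := drop j.+1 ys in ys_split.
have m_ys z : z \in a ++ nth 0 xs j :: b -> m z.
  by rewrite -ys_split => /mem_take; apply: m_xs.
have [c [u [mc gu eu]]] : exists c u, [/\ m c, gen R (a ++ b ++ drop r xs) u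
                                         & nth 0 xs j = c * nth 0 xs j + u].
  by apply: (gen_sqr_sum_split HR Hloc m_ys); rewrite -ys_split; apply/K_eq.
apply: (minimal_gens_irredundant HR Hloc _ mc gu eu).
by rewrite -cat_cons catA -ys_split cat_take_drop.
Qed.

End CanonicalColon.

Theorem lemma2p2 (Q : comUnitRingType) (R omega I : Q -> Prop) :
  is_subring R -> total_ring_of_fractions R -> noetherian R -> local R ->
  cm_dim_one R ->
  canonical_ideal R omega ->
  subS R omega -> subS omega (integral_closure R) ->
  subS (prodS R (nonunits R) (nonunits R)) (colon R omega) ->
  is_ideal (colon (nonunits R) (nonunits R)) I ->
  subS I (jacobson (colon (nonunits R) (nonunits R))) ->
  ((forall (xs : seq Q) (r : nat),
      minimal_gens R (nonunits R) xs -> (r <= size xs)%N ->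
      eqS (colon R omega)
          (sumS R (prodS R (gen R (take r xs)) (gen R (take r xs)))
                  (gen R (drop r xs))) ->
      ~ (exists x, I x /\ exists i j : nat,
            [/\ (i < r)%N, (j < r)%N & nth 0 xs j = x * nth 0 xs i]))
   <-> subS I (colon (colon R omega) (nonunits R))).
Proof.
move=> HR _ Hn Hloc _ Hcan HRo Hoint Hmm _ IJ.
split; last exact: no_gen_multiple_of_colon.
have [K1 _|HK1] := pselect (colon R omega 1); last exact: colon_of_no_gen_multiple.
(* If K = R, then K : m = m : m contains I. *)
move=> x /IJ [Bx _] b mb; rewrite -[x * b]mulr1.
exact: (K_mul HR (nonunits_sub (Bx b mb)) K1).
Qed.
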